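(* Let $V$ be a finite set of discrete random variables with joint distribution $P$, and let $\mathcal{G}_{\texttt{FD}}$ be the FD-induced graph on $V$ (assumed acyclic). Let $Z\in V$ be a sink node of $\mathcal{G}_{\texttt{FD}}$, i.e. $Z$ has no outgoing edges in $\mathcal{G}_{\texttt{FD}}$, and let $X_i$ be any node with $X_i\xrightarrow{\texttt{FD}} Z$ (an edge $(X_i,Z)$ of $\mathcal{G}_{\texttt{FD}}$). Suppose $\mathcal{S}_1$ is a harmonious skeleton over $V\setminus\{Z\}$ with respect to the marginal distribution of $P$ on $V\setminus\{Z\}$, and let $\mathcal{S}_2$ be the graph on $V$ whose only edge is the undirected edge $X_i - Z$. Then $\mathcal{S}=\mathcal{S}_1\cup\mathcal{S}_2$ (the undirected graph on $V$ whose edge set is the union of the edge sets) is a harmonious skeleton over $V$ with respect to $P$.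
   Context: Standing assumption: every variable takes at least two values with positive probability. Functional dependency: $X\xrightarrow{\texttt{FD}} Y$ means $Y=f(X)$ almost surely for some deterministic function $f$. The FD-induced graph $\mathcal{G}_{\texttt{FD}}$ has vertex set $V$ and a directed edge $(X,Y)$ whenever $X\xrightarrow{\texttt{FD}} Y$. A directed mixed graph has at most one edge between two nodes, each edge either directed ($\to$) or bidirected ($\leftrightarrow$). On a path, a non-endpoint node is a collider if both adjacent edges have arrowheads into it. A path between $X$ and $Y$ is blocked by a set $W$ (not containing $X,Y$) if some non-endpoint node on it is either a non-collider belonging to $W$, or a collider such that neither it nor any of its descendants belongs to $W$. $X$ and $Y$ are m-separated by $W$ ($X\perp_{\mathcal{G}} Y\mid W$) if every path between them is blocked by $W$. A maximal ancestral graph (MAG) is a directed mixed graph with no directed cycle, no almost directed cycle ($X\to\cdots\to Z\leftrightarrow X$), and in which every pair of non-adjacent nodes is m-separated by some set of nodes. $P$ satisfies the global Markov property (GMP) w.r.t. a MAG $\mathcal{G}$ if $X\perp_{\mathcal{G}}Y\mid W$ implies $X\perp Y\mid W$ (conditional independence under $P$). A skeleton is an undirected graph; the skeleton of a MAG is obtained by forgetting edge marks. An undirected graph $\mathcal{S}$ on a variable set is a harmonious skeleton w.r.t. a distribution $P$ on those variables if (1) there is a MAG $\mathcal{G}$ with the same adjacencies as $\mathcal{S}$, (2) $P$ satisfies GMP w.r.t. $\mathcal{G}$, and (3) no proper subgraph of $\mathcal{S}$ (obtained by deleting edges) satisfies (1) and (2). *)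

From mathcomp Require Import all_boot all_order all_algebra.
From mathcomp Require Import all_classical all_reals all_analysis.
Set Implicit Arguments. Unset Strict Implicit. Unset Printing Implicit Defensive.
Import Order.TTheory GRing.Theory Num.Theory.
Local Open Scope classical_set_scope.
Local Open Scope ring_scope.

(* variable i is the discrete random variable X i : Omega -> nat        *)
(* (countable values, encoded in nat), on a probability space P.        *)
(* A marginal on a subset of variables is obtained by only looking at   *)
(* the variables of that subset (same P, same X).                       *)
Section Prob.
Context {d : measure_display} {Omega : measurableType d} {R : realType}.
Context {I : finType}.
Variables (P : probability Omega R) (X : I -> Omega -> nat).

Definition ev1 (i : I) (a : nat) : set Omega := [set w | X i w = a].
Definition evS (W : {set I}) (v : I -> nat) : set Omega :=
  [set w | forall j, j \in W -> X j w = v j].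

Definition cond_indep (x y : I) (W : {set I}) : Prop :=
  forall (a b : nat) (v : I -> nat),
    (P (ev1 x a `&` ev1 y b `&` evS W v) * P (evS W v)
     = P (ev1 x a `&` evS W v) * P (ev1 y b `&` evS W v))%E.

Definition fdep (i j : I) : Prop :=
  exists f : nat -> nat, {ae P, forall w, X j w = f (X i w)}.

Definition fd_edge (i j : I) : bool := `[< i != j /\ fdep i j >].

Definition fd_acyclic : Prop :=
  forall i j, fd_edge i j -> ~~ connect fd_edge j i.

Definition fd_sink (z : I) : Prop := forall j, ~~ fd_edge z j.

Definition two_valued_vars : Prop :=
  forall i, exists a b : nat, a <> b /\ (0 < P (ev1 i a))%E /\ (0 < P (ev1 i b))%E.

Definition discrete_rvs : Prop := forall i a, measurable (ev1 i a).
End Prob.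

(* Directed mixed graphs: dir a b means a -> b ; bi a b means a <-> b.   *)
Record mgraph (I : finType) := MGraph { dir : rel I; bi : rel I }.

Section Graphs.
Context {I : finType}.
Implicit Types (G : mgraph I) (Vs W : {set I}) (S : rel I).

Definition adj G (a b : I) : bool := [|| dir G a b, dir G b a | bi G a b].
Definition arrow_at G (u v : I) : bool := dir G u v || bi G u v.
Definition collider G (u v w : I) : bool := arrow_at G u v && arrow_at G w v.
Definition desc G (v t : I) : bool := connect (dir G) v t.

Definition is_path G (x y : I) (s : seq I) : bool :=
  [&& path (adj G) x s, last x s == y & uniq (x :: s)].

Definition blocked_at G W (u v w : I) : bool :=
  (~~ collider G u v w && (v \in W)) ||
  (collider G u v w && [forall t, desc G v t ==> (t \notin W)]).

Definition blocked G W (x : I) (s : seq I) : bool :=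
  [exists k : 'I_(size s),
     (0 < (k : nat))%N &&
     blocked_at G W (nth x (x :: s) k.-1) (nth x (x :: s) k)
                    (nth x (x :: s) k.+1)].

(* m-separation (for W not containing x, y) *)
Definition msep G (x y : I) W : Prop :=
  forall s, is_path G x y s -> blocked G W x s.

Definition dmg_on Vs G : Prop :=
  [/\ forall a b, dir G a b -> (a \in Vs) && (b \in Vs),
      forall a b, bi G a b -> (a \in Vs) && (b \in Vs),
      forall a b, bi G a b = bi G b a,
      forall a, ~~ dir G a a && ~~ bi G a a &
      forall a b, ~~ (dir G a b && dir G b a) && ~~ (dir G a b && bi G a b)].

Definition is_MAG Vs G : Prop :=
  [/\ dmg_on Vs G,
      forall a b, dir G a b -> ~~ connect (dir G) b a,
      forall a b, bi G b a -> ~~ connect (dir G) a b &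
      forall a b, a \in Vs -> b \in Vs -> a != b -> ~~ adj G a b ->
        exists W, [/\ W \subset Vs, a \notin W, b \notin W & msep G a b W]].

Definition ugraph_on Vs S : Prop :=
  [/\ forall a b, S a b -> (a \in Vs) && (b \in Vs),
      forall a b, S a b = S b a & forall a, ~~ S a a].
End Graphs.

Section Harmonious.
Context {d : measure_display} {Omega : measurableType d} {R : realType}.
Context {I : finType}.
Variables (P : probability Omega R) (X : I -> Omega -> nat).

Definition GMP (Vs : {set I}) (G : mgraph I) : Prop :=
  forall x y (W : {set I}), x \in Vs -> y \in Vs -> x != y ->
    W \subset Vs -> x \notin W -> y \notin W ->
    msep G x y W -> cond_indep P X x y W.

Definition skel_ok (Vs : {set I}) (S : rel I) : Prop :=
  exists G : mgraph I, [/\ is_MAG Vs G, forall a b, adj G a b = S a b & GMP Vs G].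

Definition harmonious (Vs : {set I}) (S : rel I) : Prop :=
  [/\ ugraph_on Vs S, skel_ok Vs S &
      forall S' : rel I, ugraph_on Vs S' ->
        (forall a b, S' a b -> S a b) ->
        (exists a b, S a b && ~~ S' a b) ->
        ~ skel_ok Vs S'].
End Harmonious.

Definition rel_union {I : finType} (S1 S2 : rel I) : rel I := fun a b => S1 a b || S2 a b.
Definition edge_graph {I : finType} (x z : I) : rel I :=
  fun a b => ((a == x) && (b == z)) || ((a == z) && (b == x)).

(* Let G1 be a MAG realising S1 on V \ {z}, and G the graph G1 plus the arrow
   xi -> z.  As z is a sink whose only neighbour is xi, paths of G between
   nodes other than z never pass through z, and z enters a separation only as
   a descendant of xi; so m-separation in G is m-separation in G1, with xi in
   place of z in the conditioning set.  The global Markov property for G then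
   follows from that of G1 and z = f(xi): facts about z are obtained by summing
   those about xi over the level sets of f, and the case where z but not xi is
   conditioned on uses weak transitivity of m-separation through the collider
   xi.  Minimality: a proper subgraph of S1 + (xi - z) either drops xi - z,
   leaving z isolated and hence independent of xi, which z = f(xi) with both
   variables non-degenerate forbids; or it keeps xi - z, and deleting z from a
   MAG for it gives a MAG for a proper subgraph of S1, against the harmony of
   S1. *)

From mathcomp Require Import all_boot all_order all_algebra.
From mathcomp Require Import all_classical all_reals all_analysis.
From mathcomp Require Import zify ring.

Set Implicit Arguments. Unset Strict Implicit. Unset Printing Implicit Defensive.
Import Order.TTheory GRing.Theory Num.Theory.

Section OpenWalks.
Context {I : finType}.
Implicit Types (H : mgraph I) (W : {set I}).

Definition open_at H W (u v w : I) : bool := ~~ blocked_at H W u v w.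

Definition walk_adj H x0 l : Prop :=
  forall k, k.+1 < size l -> adj H (nth x0 l k) (nth x0 l k.+1).

Definition walk_open H W x0 l : Prop :=
  forall k, k.+2 < size l ->
    open_at H W (nth x0 l k) (nth x0 l k.+1) (nth x0 l k.+2).

Lemma open_at_collider H W u v w :
  open_at H W u v w -> collider H u v w -> exists t, desc H v t && (t \in W).
Proof.
rewrite /open_at /blocked_at => + hc; rewrite hc /= => /forallPn [t].
by rewrite negb_imply negbK => ht; exists t.
Qed.

Lemma open_at_noncollider H W u v w :
  open_at H W u v w -> ~~ collider H u v w -> v \notin W.
Proof. by rewrite /open_at /blocked_at => + /negbTE hc; rewrite hc /= orbF. Qed.

Lemma open_atI H W u v w :
  (collider H u v w -> exists t, desc H v t && (t \in W)) ->
  (~~ collider H u v w -> v \notin W) -> open_at H W u v w.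
Proof.
rewrite /open_at /blocked_at; case: (collider H u v w) => /= [h _|_]; last first.
  by rewrite orbF; apply.
have [t /andP[ht1 ht2]] := h erefl.
by apply/forallPn; exists t; rewrite ht1 ht2.
Qed.

Lemma open_atC H W u v w : open_at H W u v w = open_at H W w v u.
Proof. by rewrite /open_at /blocked_at /collider [arrow_at H u v && _]andbC. Qed.

Lemma adjC H : (forall a b, bi H a b = bi H b a) -> forall a b, adj H a b = adj H b a.
Proof. by move=> hsym a b; rewrite /adj hsym; case: (dir H a b); case: (dir H b a). Qed.

Lemma walk_adj_default H x0 x1 l : walk_adj H x0 l -> walk_adj H x1 l.
Proof.
move=> h k hk; have e n : n < size l -> nth x1 l n = nth x0 l n.
  exact: set_nth_default.
by rewrite !e ?h //; lia.
Qed.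

Lemma walk_open_default H W x0 x1 l : walk_open H W x0 l -> walk_open H W x1 l.
Proof.
move=> h k hk; have e n : n < size l -> nth x1 l n = nth x0 l n.
  exact: set_nth_default.
by rewrite !e ?h //; lia.
Qed.

Lemma path_walk_adj H x s : path (adj H) x s <-> walk_adj H x (x :: s).
Proof.
split => [/(pathP x) h k hk | h]; first by apply: h; rewrite -ltnS.
by apply/(pathP x) => i hi; apply: h; rewrite /= ltnS.
Qed.

Lemma not_blocked_walk_open H W x s :
  ~~ blocked H W x s <-> walk_open H W x (x :: s).
Proof.
split => [/existsPn hb k hk | h].
  have hk' : k.+1 < size s by move: hk => /=; lia.
  exact: (hb (Ordinal hk')).
apply/existsPn => -[k hk] /=; apply/negP => /andP[k0].
by have := h k.-1; rewrite prednK // => /(_ hk)/negP.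
Qed.

Lemma walk_adj_rev H : (forall a b, bi H a b = bi H b a) ->
  forall x0 l, walk_adj H x0 l -> walk_adj H x0 (rev l).
Proof.
move=> hsym x0 l h k; rewrite size_rev => hk.
rewrite !nth_rev; try lia.
rewrite adjC //; have := h (size l - k.+2).
by rewrite (_ : (size l - k.+2).+1 = size l - k.+1); [apply; lia | lia].
Qed.

Lemma walk_open_rev H W x0 l : walk_open H W x0 l -> walk_open H W x0 (rev l).
Proof.
move=> h k; rewrite size_rev => hk.
rewrite !nth_rev; try lia.
rewrite open_atC; have := h (size l - k.+3).
rewrite (_ : (size l - k.+3).+2 = size l - k.+1); last lia.
by rewrite (_ : (size l - k.+3).+1 = size l - k.+2); [apply; lia | lia].
Qed.

Lemma walk_adj_cat H x0 a v b :
  walk_adj H x0 (rcons a v) -> walk_adj H x0 (v :: b) -> walk_adj H x0 (a ++ v :: b).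
Proof.
move=> h1 h2 k; rewrite size_cat /= => hk; rewrite !nth_cat.
have h1a m : m < size a -> nth x0 (rcons a v) m = nth x0 a m.
  by move=> hm; rewrite nth_rcons hm.
have h1v : nth x0 (rcons a v) (size a) = v by rewrite nth_rcons ltnn eqxx.
case: (ltnP k.+1 (size a)) => c1.
  have -> : k < size a by lia.
  by rewrite -!h1a //; try lia; apply: h1; rewrite size_rcons; lia.
case: (ltnP k (size a)) => c2; last first.
  by rewrite (_ : k.+1 - size a = (k - size a).+1); [apply: h2 => /=|]; lia.
have ek : k.+1 = size a by lia.
rewrite ek subnn -h1a //= -[X in adj _ _ X]h1v -ek.
by apply: h1; rewrite size_rcons; lia.
Qed.

Lemma walk_open_cat H W x0 a v b :
  walk_open H W x0 (rcons a v) -> walk_open H W x0 (v :: b) ->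
  (0 < size a -> 0 < size b -> open_at H W (last x0 a) v (head x0 b)) ->
  walk_open H W x0 (a ++ v :: b).
Proof.
move=> h1 h2 h3 k; rewrite size_cat /= => hk; rewrite !nth_cat.
have h1a m : m < size a -> nth x0 (rcons a v) m = nth x0 a m.
  by move=> hm; rewrite nth_rcons hm.
have h1v : nth x0 (rcons a v) (size a) = v by rewrite nth_rcons ltnn eqxx.
case: (ltnP k.+2 (size a)) => c1.
  have -> : k < size a by lia.
  have -> : k.+1 < size a by lia.
  by rewrite -!h1a //; try lia; apply: h1; rewrite size_rcons; lia.
case: (ltnP k.+1 (size a)) => c2.
  have -> : k < size a by lia.
  have ek : k.+2 = size a by lia.
  rewrite ek subnn -!h1a //; try lia.
  rewrite /= -[X in open_at _ _ _ _ X]h1v -ek.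
  by apply: h1; rewrite size_rcons; lia.
case: (ltnP k (size a)) => c3; last first.
  rewrite (_ : k.+1 - size a = (k - size a).+1); last lia.
  by rewrite (_ : k.+2 - size a = (k - size a).+2); [apply: h2 => /=|]; lia.
have ek : k = (size a).-1 by lia.
rewrite (_ : k.+1 - size a = 0); last lia.
rewrite (_ : k.+2 - size a = 1); last lia.
rewrite ek nth_last; case: b hk h3 {h2} => [|w b] /= hk; first lia.
by apply; lia.
Qed.

End OpenWalks.

Section Shortcut.
Context {I : finType}.
Variables (H : mgraph I) (W : {set I}) (x0 : I) (l : seq I).
Hypothesis hsym : forall a b, bi H a b = bi H b a.
Hypothesis hacy : forall a b, dir H a b -> ~~ connect (dir H) b a.
Hypothesis hadj : walk_adj H x0 l.
Hypothesis hopen : walk_open H W x0 l.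

Local Notation L := (nth x0 l).

Lemma adj_no_arrow_dir a b : adj H a b -> ~~ arrow_at H b a -> dir H a b.
Proof.
rewrite /adj /arrow_at hsym; case: (dir H a b) => //=.
by case: (dir H b a); case: (bi H b a).
Qed.

(* Leaving [L i] by an arrow, an open walk either keeps going along directed
   edges or meets a collider, whose descendant in [W] is then one of [L i]. *)
Lemma walk_open_dir_chain i j : j < size l -> dir H (L i) (L i.+1) ->
  forall n, i.+1 + n <= j ->
  (exists t, desc H (L i) t && (t \in W)) \/
  (dir H (L (i + n)) (L (i + n).+1) && connect (dir H) (L i.+1) (L (i + n).+1)).
Proof.
move=> hj hd; elim=> [|n IH] hn; first by right; rewrite addn0 hd connect0.
case: (IH ltac:(lia)) => [hW|/andP[h1 h2]]; first by left.
set m := (i + n).+1.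
have ho : open_at H W (L (i + n)) (L m) (L m.+1) by apply: hopen; rewrite /m; lia.
rewrite addnS -/m.
case ha: (arrow_at H (L m.+1) (L m)).
  have hc : collider H (L (i + n)) (L m) (L m.+1) by rewrite /collider ha /arrow_at h1.
  have [t /andP[ht1 ht2]] := open_at_collider ho hc.
  left; exists t; rewrite ht2 andbT /desc.
  exact: connect_trans (connect1 hd) (connect_trans h2 ht1).
have hdm : dir H (L m) (L m.+1).
  by apply: adj_no_arrow_dir; [apply: hadj; rewrite /m; lia | rewrite ha].
by right; rewrite hdm (connect_trans h2 (connect1 hdm)).
Qed.

(* Acyclicity is what makes the splice open: a non-collider at [L i] that
   leaves by an arrow can only come back to [L i] through a collider. *)
Lemma walk_open_splice i j : 0 < i -> i < j -> j.+1 < size l -> L i = L j ->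
  open_at H W (L i.-1) (L i) (L j.+1).
Proof.
move=> i0 ij js eij.
have o1 : open_at H W (L i.-1) (L i) (L i.+1).
  by have := hopen (k := i.-1); rewrite prednK //; apply; lia.
have o2 : open_at H W (L j.-1) (L j) (L j.+1).
  by have := hopen (k := j.-1); rewrite prednK; [apply; lia | lia].
apply: open_atI => [/andP[hu _]|hnc].
  have [hc1|hnc1] := boolP (collider H (L i.-1) (L i) (L i.+1)).
    exact: open_at_collider o1 hc1.
  have hdi : dir H (L i) (L i.+1).
    apply: adj_no_arrow_dir; first by apply: hadj; lia.
    by move: hnc1; rewrite /collider hu.
  case: (walk_open_dir_chain js hdi (n := j - i.+1) ltac:(lia)) => [//|/andP[_]].
  rewrite (_ : (i + (j - i.+1)).+1 = j); last lia.
  by rewrite -eij => hc; move: (hacy hdi); rewrite hc.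
apply/negP => hv.
have hc1 : collider H (L i.-1) (L i) (L i.+1).
  by apply/negPn/negP => /(open_at_noncollider o1); rewrite hv.
have hc2 : collider H (L j.-1) (L j) (L j.+1).
  by apply/negPn/negP => /(open_at_noncollider o2); rewrite -eij hv.
move: hnc hc1 hc2; rewrite /collider -eij.
by move=> /negP hnc /andP[h1 _] /andP[_ h2]; apply: hnc; rewrite h1 h2.
Qed.

Lemma nth_splice i j k : i <= j -> j < size l ->
  nth x0 (take i l ++ drop j l) k = if k < i then L k else L (k - i + j).
Proof.
move=> ij js; have il : i < size l by lia.
rewrite nth_cat size_take il.
by case: ifP => ki; [rewrite nth_take | rewrite nth_drop; congr nth; lia].
Qed.

Lemma size_splice i j : i <= j -> j < size l ->
  size (take i l ++ drop j l) = i + (size l - j).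
Proof.
move=> ij js; have il : i < size l by lia.
by rewrite size_cat size_take size_drop il.
Qed.

Lemma walk_splice i j : i < j -> j < size l -> L i = L j ->
  let l' := take i l ++ drop j l in
  [/\ nth x0 l' 0 = L 0, nth x0 l' (size l').-1 = L (size l).-1,
      walk_adj H x0 l' & walk_open H W x0 l'].
Proof.
move=> ij js eij l'.
have e k := @nth_splice i j k (ltnW ij) js.
have sz := size_splice (ltnW ij) js.
split.
- rewrite /l' e; case: ifP => // /negbT; rewrite -leqNgt leqn0 => /eqP i0.
  by rewrite i0 in eij *; rewrite sub0n add0n -eij.
- by rewrite /l' e sz ifF; [congr nth | ]; lia.
- move=> k; rewrite /l' sz => hk; rewrite !e.
  case: (ltnP k.+1 i) => h1.
    have -> : k < i by lia.
    by apply: hadj; lia.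
  case: (ltnP k i) => h2.
    have ek : k.+1 = i by lia.
    by rewrite ek subnn add0n -eij -ek; apply: hadj; lia.
  have -> : k.+1 - i + j = (k - i + j).+1 by lia.
  by apply: hadj; lia.
- move=> k; rewrite /l' sz => hk; rewrite !e.
  case: (ltnP k.+2 i) => h1.
    have -> : k < i by lia.
    have -> : k.+1 < i by lia.
    by apply: hopen; lia.
  case: (ltnP k.+1 i) => h2.
    have -> : k < i by lia.
    have ek : k.+2 = i by lia.
    by rewrite ek subnn add0n -eij -ek; apply: hopen; lia.
  case: (ltnP k i) => h3.
    have -> : k.+1 - i + j = j by lia.
    have -> : k.+2 - i + j = j.+1 by lia.
    have -> : k = i.-1 by lia.
    by rewrite -eij; apply: walk_open_splice => //; lia.
  have -> : k.+1 - i + j = (k - i + j).+1 by lia.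
  have -> : k.+2 - i + j = (k - i + j).+2 by lia.
  by apply: hopen; lia.
Qed.

End Shortcut.

Section OpenPaths.
Context {I : finType}.
Variable H : mgraph I.
Hypothesis hsym : forall a b, bi H a b = bi H b a.
Hypothesis hacy : forall a b, dir H a b -> ~~ connect (dir H) b a.

Lemma walk_open_uniq W x0 l : 0 < size l -> walk_adj H x0 l -> walk_open H W x0 l ->
  exists l', [/\ 0 < size l', nth x0 l' 0 = nth x0 l 0,
     nth x0 l' (size l').-1 = nth x0 l (size l).-1, uniq l' &
     walk_adj H x0 l' /\ walk_open H W x0 l'].
Proof.
move: {2}(size l) (leqnn (size l)) => n; elim: n l => [|n IH] l hs hl0 ha ho.
  by lia.
have [hu|/(uniqPn x0) [i [j [ij js eij]]]] := boolP (uniq l); first by exists l.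
(* [uniqPn] states [j < size l] at the [eqType] carrier; restated so [lia]
   sees the same atom [size l] as elsewhere. *)
have {}js : j < size l := js.
have [e0 e1 ha' ho'] := walk_splice hsym hacy ha ho ij js eij.
have hsz := size_splice (ltnW ij) js.
have s1 : size (take i l ++ drop j l) <= n by rewrite hsz; lia.
have s2 : 0 < size (take i l ++ drop j l) by rewrite hsz; lia.
have [l'' [h0 h1 h2 h3 h45]] := IH _ s1 s2 ha' ho'.
by exists l''; rewrite h1 h2 e0 e1.
Qed.

Lemma walk_open_path_not_msep W x0 l a b :
  0 < size l -> nth x0 l 0 = a -> nth x0 l (size l).-1 = b -> uniq l ->
  walk_adj H x0 l -> walk_open H W x0 l -> ~ msep H a b W.
Proof.
case: l => [//|a' s] _ /= <- hb hu ha ho hm.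
have hp : is_path H a' b s.
  apply/and3P; split => //; first by apply/path_walk_adj; apply: walk_adj_default ha.
  by rewrite -hb -[size s]/((size (a' :: s)).-1) nth_last.
by have := hm s hp; apply/negP/not_blocked_walk_open; apply: walk_open_default ho.
Qed.

Lemma walk_open_not_msep W x0 l a b :
  0 < size l -> nth x0 l 0 = a -> nth x0 l (size l).-1 = b ->
  walk_adj H x0 l -> walk_open H W x0 l -> ~ msep H a b W.
Proof.
move=> h0 <- <- ha ho.
have [l' [h0' <- <- hu [ha' ho']]] := walk_open_uniq h0 ha ho.
exact: walk_open_path_not_msep ha' ho'.
Qed.

End OpenPaths.

Lemma msep_sym {I : finType} (H : mgraph I) W x y :
  (forall a b, bi H a b = bi H b a) -> msep H x y W -> msep H y x W.
Proof.
move=> hsym hm s hp.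
case: (boolP (blocked H W y s)) => // /not_blocked_walk_open ho; exfalso.
move: hp => /and3P[hpa /eqP hl hu].
apply: (@walk_open_path_not_msep _ H W x (rev (y :: s))) hm.
- by rewrite size_rev.
- by rewrite nth_rev //= subn1 /= nth_last.
- by rewrite size_rev nth_rev /= ?subnn.
- by rewrite rev_uniq.
- by apply: walk_adj_rev => //; apply: walk_adj_default; apply/path_walk_adj.
- by apply: walk_open_rev; apply: walk_open_default ho.
Qed.

Definition del_node {I : finType} (H : mgraph I) (z : I) : mgraph I :=
  MGraph (fun a b => [&& dir H a b, a != z & b != z])
         (fun a b => [&& bi H a b, a != z & b != z]).

Lemma msep_transfer {I : finType} (A B : mgraph I) x y WA WB :
  (forall s, is_path B x y s -> is_path A x y s) ->
  (forall s, is_path B x y s -> forall u v w, u \in x :: s -> v \in x :: s -> w \in x :: s ->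
     open_at B WB u v w -> open_at A WA u v w) ->
  msep A x y WA -> msep B x y WB.
Proof.
move=> hpa hop hm s hp.
case: (boolP (blocked B WB x s)) => // /not_blocked_walk_open ho; exfalso.
have := hm s (hpa s hp); apply/negP/not_blocked_walk_open => k hk.
by apply: (hop s hp); try (apply: mem_nth; apply: (leq_trans _ hk); lia); apply: ho.
Qed.

Section DelNode.
Context {I : finType}.
Implicit Types (W : {set I}).
Variables (H : mgraph I) (z : I).

Lemma adj_del_node a b : adj (del_node H z) a b = [&& adj H a b, a != z & b != z].
Proof.
rewrite /adj /=.
by case: (dir H a b); case: (dir H b a); case: (bi H a b); case: (a != z); case: (b != z).
Qed.

Lemma collider_del_node u v w : u != z -> v != z -> w != z ->
  collider (del_node H z) u v w = collider H u v w.
Proof. by move=> hu hv hw; rewrite /collider /arrow_at /= hu hv hw !andbT. Qed.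

Lemma desc_del_node v t : desc (del_node H z) v t -> desc H v t.
Proof. by apply: connect_sub => a b /= /and3P[hab _ _]; apply: connect1. Qed.

Lemma is_path_del_node x y s : is_path (del_node H z) x y s -> is_path H x y s.
Proof.
move=> /and3P[/path_walk_adj hp hl hu]; apply/and3P; split => //.
by apply/path_walk_adj => k /hp; rewrite adj_del_node => /andP[].
Qed.

Lemma open_at_del_node W W' u v w : u != z -> v != z -> w != z ->
  (forall t, t \in W' -> exists2 t', t' \in W & desc H t t') ->
  (forall t, t != z -> t \in W -> t \in W') ->
  open_at (del_node H z) W' u v w -> open_at H W u v w.
Proof.
move=> hu hv hw hW' hW ho; apply: open_atI; rewrite -collider_del_node // => hc.
  have [t /andP[ht1 /hW' [t' ht'W ht']]] := open_at_collider ho hc.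
  by exists t'; rewrite ht'W andbT; apply: connect_trans (desc_del_node ht1) ht'.
by apply: contra (open_at_noncollider ho hc); apply: hW.
Qed.

End DelNode.

Section PendantNode.
Context {I : finType}.
Implicit Types (W : {set I}).
Variables (H : mgraph I) (z xi : I).
Hypothesis hsym : forall a b, bi H a b = bi H b a.
Hypothesis hpendant : forall u, adj H z u -> u = xi.

Lemma adj_pendant u : adj H u z -> u = xi.
Proof. by rewrite adjC //; apply: hpendant. Qed.

(* The only neighbour of [z] is [xi], so a path visiting [z] in its interior
   would visit [xi] twice. *)
Lemma walk_avoid_pendant x0 l : walk_adj H x0 l -> uniq l -> nth x0 l 0 != z ->
  nth x0 l (size l).-1 != z -> z \notin l.
Proof.
move=> ha hu h0 hl; apply/negP => /(nthP x0) [m hm em].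
have {}hm : m < size l := hm.
have m0 : 0 < m by case: m hm em => [|m] // _ e; move: h0; rewrite e eqxx.
have m1 : m < (size l).-1.
  rewrite ltn_neqAle -ltnS prednK; last lia.
  by rewrite hm andbT; apply/eqP => e; move: hl; rewrite -e em eqxx.
have e1 : nth x0 l m.-1 = xi.
  by apply: adj_pendant; rewrite -em; have := ha m.-1; rewrite prednK //; apply; lia.
have e2 : nth x0 l m.+1 = xi by apply: hpendant; rewrite -em; apply: ha; lia.
have : nth x0 l m.-1 == nth x0 l m.+1 by rewrite e1 e2.
have i1 : m.-1 < size l by lia.
have i2 : m.+1 < size l by lia.
by rewrite (nth_uniq x0 i1 i2 hu) => /eqP; lia.
Qed.

Lemma is_path_pendant x y s : x != z -> y != z -> is_path H x y s ->
  is_path (del_node H z) x y s /\ z \notin x :: s.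
Proof.
move=> hx hy /and3P[hp /eqP hl hu].
have hz : z \notin x :: s.
  apply: (@walk_avoid_pendant x) => //; first exact/path_walk_adj.
  by rewrite nth_last /= hl.
split => //; apply/and3P; split; rewrite ?hl //.
apply/path_walk_adj => k hk; rewrite adj_del_node (iffLR (path_walk_adj H x s) hp) //.
by rewrite !(memPn hz) //; apply: mem_nth; apply: (leq_trans _ hk).
Qed.

Lemma walk_open_of_del_node W W' x y s : x != z -> y != z ->
  (forall t, t \in W' -> exists2 t', t' \in W & desc H t t') ->
  (forall t, t != z -> t \in W -> t \in W') ->
  is_path (del_node H z) x y s -> walk_open (del_node H z) W' x (x :: s) ->
  walk_open H W x (x :: s).
Proof.
move=> hx hy hW' hW hp ho k hk; have [_ hz] := is_path_pendant hx hy (is_path_del_node hp).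
have nz n : n < size (x :: s) -> nth x (x :: s) n != z.
  by move=> hn; apply: contraNneq hz => <-; apply: mem_nth.
by apply: open_at_del_node (ho k hk) => //; apply: nz; apply: (leq_trans _ hk); lia.
Qed.

Lemma msep_del_node W W' x y : x != z -> y != z ->
  (forall t, t \in W' -> exists2 t', t' \in W & desc H t t') ->
  (forall t, t != z -> t \in W -> t \in W') ->
  msep H x y W -> msep (del_node H z) x y W'.
Proof.
move=> hx hy hW' hW hm s hp.
case: (boolP (blocked _ W' x s)) => // /not_blocked_walk_open ho; exfalso.
have := hm s (is_path_del_node hp); apply/negP/not_blocked_walk_open.
exact: walk_open_of_del_node hx hy hW' hW hp ho.
Qed.

Lemma msep_del_node_setD1 W x y : x != z -> y != z ->
  msep H x y W -> msep (del_node H z) x y (W :\ z).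
Proof.
move=> hx hy; apply: msep_del_node => // t; last by rewrite in_setD1 => ->.
by rewrite in_setD1 => /andP[_ htW]; exists t => //; apply: connect0.
Qed.

Hypothesis hanti : ~~ (dir H xi z && dir H z xi).

(* A directed path through the pendant node [z] would have to enter and
   leave it through [xi], using both [xi -> z] and [z -> xi]. *)
Lemma desc_del_nodeI v t : v != z -> t != z -> desc H v t -> desc (del_node H z) v t.
Proof.
move=> hv ht /connectP[p hp et]; subst t.
elim: p v hv hp ht => [|u p IH] v hv /=; first by move=> _ _; apply: connect0.
move=> /andP[hvu hp] hl.
have hu : u != z.
  apply/negP => /eqP euz; subst u.
  case: p hp hl IH => [|w p] /=; first by rewrite eqxx.
  move=> /andP[hzw _] _ _.
  have ev : v = xi by apply: adj_pendant; rewrite /adj hvu.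
  have ew : w = xi by apply: hpendant; rewrite /adj hzw.
  by subst v w; move: hanti; rewrite hvu hzw.
apply: connect_trans (connect1 (_ : dir (del_node H z) v u)) (IH _ hu hp hl).
by rewrite /= hvu hv hu.
Qed.

Lemma msep_of_del_node x y W : x != z -> y != z -> z \notin W ->
  msep (del_node H z) x y W -> msep H x y W.
Proof.
move=> hx hy hzW; apply: msep_transfer => [s hp|s hp u v w hu hv hw ho].
  by case: (is_path_pendant hx hy hp).
have [_ hz] := is_path_pendant hx hy hp.
have nz a : a \in x :: s -> a != z by apply: contraTneq => ->.
apply: open_atI; rewrite collider_del_node ?nz // => hc.
  have [t /andP[ht1 ht2]] := open_at_collider ho hc.
  exists t; rewrite ht2 andbT; apply: desc_del_nodeI ht1; first exact: nz.
  by apply: contraNneq hzW => <-.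
exact: open_at_noncollider ho hc.
Qed.

End PendantNode.

Lemma in_setTD1 {I : finType} (z a : I) : (a \in [set: I] :\ z) = (a != z).
Proof. by rewrite in_setD1 finset.in_setT andbT. Qed.

Lemma is_MAG_del_node {I : finType} (H : mgraph I) z xi :
  is_MAG [set: I] H -> (forall u, adj H z u -> u = xi) ->
  is_MAG ([set: I] :\ z) (del_node H z).
Proof.
move=> [[hd hb hsym hirr hanti] hacy halm hmax] hpendant.
split; first split.
- by move=> a b /and3P[_ ha hb']; rewrite !in_setTD1 ha hb'.
- by move=> a b /and3P[_ ha hb']; rewrite !in_setTD1 ha hb'.
- by move=> a b /=; rewrite hsym; case: (a != z); case: (b != z); rewrite ?andbF.
- by move=> a /=; case/andP: (hirr a) => /negbTE -> /negbTE ->.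
- move=> a b /=; case/andP: (hanti a b) => h1 h2.
  by apply/andP; split; [apply: contra h1 | apply: contra h2];
    move=> /andP[/and3P[-> _ _] /and3P[-> _ _]].
- move=> a b /and3P[hab _ _]; apply: contra (hacy a b hab); exact: desc_del_node.
- move=> a b /and3P[hab _ _]; apply: contra (halm a b hab); exact: desc_del_node.
- move=> a b; rewrite !in_setTD1 adj_del_node => az bz hne; rewrite az bz !andbT => hna.
  have [W [_ haW hbW hm]] := hmax a b (finset.in_setT a) (finset.in_setT b) hne hna.
  exists (W :\ z); split; rewrite ?in_setD1 ?(negbTE haW) ?(negbTE hbW) ?andbF //.
    by apply/fintype.subsetP => t; rewrite !in_setD1 finset.in_setT andbT => /andP[].
  exact: (msep_del_node_setD1 hsym hpendant).
Qed.

Lemma not_msep_open_path {I : finType} (H : mgraph I) (W : {set I}) a b :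
  ~ msep H a b W -> exists s, is_path H a b s /\ walk_open H W a (a :: s).
Proof.
move=> h; apply: contrapT => hn; apply: h => s hp.
case: (boolP (blocked H W a s)) => // /not_blocked_walk_open ho.
by case: hn; exists s.
Qed.

Section PendantSink.
Context {I : finType}.
Implicit Types (W : {set I}).
Variables (H : mgraph I) (z xi : I).
Hypothesis hsym : forall a b, bi H a b = bi H b a.
Hypothesis hpendant : forall u, adj H z u -> u = xi.
Hypothesis hxz : dir H xi z.
Hypothesis hnoarr : ~~ arrow_at H z xi.
Hypothesis hxiz : xi != z.

(* Prefixing [z] keeps an open path from [xi] open: the edge [z - xi] has no
   arrowhead at [xi], and [xi] is not in [W]. *)
Lemma msep_pendant W y : y != z -> z \notin W -> xi \notin W -> msep H z y W ->
  y != xi /\ msep (del_node H z) xi y W.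
Proof.
move=> hy hzW hxW hm.
have hzx : adj H z xi by rewrite /adj hxz !orbT.
split.
  apply/eqP => e; subst y.
  have hp : is_path H z xi [:: xi] by rewrite /is_path /= hzx eqxx /= inE eq_sym hxiz.
  by have /existsP[[[|k] hk]] := hm _ hp.
move=> s hp; case: (boolP (blocked _ W xi s)) => // /not_blocked_walk_open ho; exfalso.
have hpH := is_path_del_node hp.
have [_ hz] := is_path_pendant hsym hpendant hxiz hy hpH.
have ho' : walk_open H W xi (xi :: s).
  apply: (walk_open_of_del_node hsym hpendant hxiz hy _ _ hp ho) => // t htW.
  by exists t => //; apply: connect0.
have hp' : is_path H z y (xi :: s).
  move: hpH => /and3P[hpa hl hu]; apply/and3P; split => //.
    by rewrite /= hzx.
  by rewrite cons_uniq hz.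
have := hm _ hp'; apply/negP/not_blocked_walk_open.
rewrite -[z :: xi :: s]/([:: z] ++ xi :: s); apply: walk_open_cat.
- by case.
- exact: walk_open_default ho'.
- by move=> _ _ /=; apply: open_atI; rewrite /collider (negbTE hnoarr).
Qed.

Hypothesis hacy : forall a b, dir H a b -> ~~ connect (dir H) b a.

(* Two open paths [x ~ xi] and [y ~ xi] avoiding [z] glue into an open walk
   [x ~ xi ~ y] of [H]: [xi] has the descendant [z] in [W], so it may be a collider. *)
Lemma msep_pendant_weak_trans W x y : x != z -> y != z -> x != xi -> y != xi ->
  z \in W -> xi \notin W -> msep H x y W ->
  msep (del_node H z) x xi (W :\ z) \/ msep (del_node H z) y xi (W :\ z).
Proof.
move=> hx hy hxx hyx hzW hxW hm.
case: (pselect (msep (del_node H z) x xi (W :\ z))) => h1; first by left.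
case: (pselect (msep (del_node H z) y xi (W :\ z))) => h2; first by right.
exfalso.
have lift a s : a != z -> is_path (del_node H z) a xi s ->
    walk_open (del_node H z) (W :\ z) a (a :: s) ->
    walk_adj H a (a :: s) /\ walk_open H W a (a :: s).
  move=> az hp ho; split.
    by apply/path_walk_adj; case/and3P: (is_path_del_node hp).
  apply: (walk_open_of_del_node hsym hpendant az hxiz _ _ hp ho) => t.
    by rewrite in_setD1 => /andP[_ htW]; exists t => //; apply: connect0.
  by rewrite in_setD1 => ->.
have [s1 [hp1 ho1]] := not_msep_open_path h1.
have [s2 [hp2 ho2]] := not_msep_open_path h2.
have [ha1 ht1] := lift _ _ hx hp1 ho1.
have [ha2 ht2] := lift _ _ hy hp2 ho2.
move: hp1 hp2 => /and3P[_ /eqP hl1 _] /and3P[_ /eqP hl2 _].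
set a := belast x s1; set b := rev (belast y s2).
have ea : x :: s1 = rcons a xi by rewrite lastI hl1.
have eb : rev (y :: s2) = xi :: b by rewrite lastI hl2 rev_rcons.
apply: (walk_open_not_msep hsym hacy (l := a ++ xi :: b) (x0 := x)) hm.
- by rewrite size_cat /= addnS.
- by rewrite -cat_rcons -ea.
- by rewrite nth_last -eb last_cat rev_cons last_rcons.
- apply: walk_adj_cat; first by rewrite -ea.
  by rewrite -eb; apply: walk_adj_rev => //; apply: walk_adj_default ha2.
- apply: walk_open_cat; first by rewrite -ea.
    by rewrite -eb; apply: walk_open_rev; apply: walk_open_default ht2.
  by move=> _ _; apply: open_atI => // _; exists z; rewrite hzW andbT; apply: connect1.
Qed.

End PendantSink.

Definition add_dir {I : finType} (H : mgraph I) (a b : I) : mgraph I :=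
  MGraph (fun u v => dir H u v || (u == a) && (v == b)) (bi H).

Lemma adj_add_dir {I : finType} (H : mgraph I) (a b u v : I) :
  adj (add_dir H a b) u v = rel_union (adj H) (edge_graph a b) u v.
Proof.
rewrite /rel_union /edge_graph /adj /=.
by case: (dir H u v); case: (dir H v u); case: (bi H u v); case: (u == a);
  case: (v == b); case: (u == b); case: (v == a).
Qed.

Lemma connect_from_sink {I : finType} (H : mgraph I) z t :
  (forall u, ~~ dir H z u) -> connect (dir H) z t -> t = z.
Proof.
move=> h /connectP[[|u p] /= hp ->] //.
by move: hp (h u) => /andP[->].
Qed.

Section AddSink.
Context {I : finType}.
Variables (G1 : mgraph I) (z xi : I).
Hypothesis hxiz : xi != z.
Hypothesis mag1 : is_MAG ([set: I] :\ z) G1.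

Local Notation G := (add_dir G1 xi z).

Let dir1z a b : dir G1 a b -> (a != z) && (b != z).
Proof. by case: mag1 => -[h _ _ _ _] _ _ _ /h; rewrite !in_setTD1. Qed.

Let bi1z a b : bi G1 a b -> (a != z) && (b != z).
Proof. by case: mag1 => -[_ h _ _ _] _ _ _ /h; rewrite !in_setTD1. Qed.

Let dir1_z a : dir G1 a z = false.
Proof. by apply/negP => /dir1z; rewrite eqxx andbF. Qed.

Let dir1_from_z a : dir G1 z a = false.
Proof. by apply/negP => /dir1z; rewrite eqxx. Qed.

Let bi1_z a : bi G1 a z = false.
Proof. by apply/negP => /bi1z; rewrite eqxx andbF. Qed.

Let bi1_from_z a : bi G1 z a = false.
Proof. by apply/negP => /bi1z; rewrite eqxx. Qed.

Lemma del_node_add_dir : del_node G z = G1.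
Proof.
rewrite [RHS](_ : G1 = MGraph (dir G1) (bi G1)); last by case: (G1).
congr MGraph; apply/funext => u; apply/funext => v /=.
  case: (boolP (dir G1 u v)) => [/dir1z/andP[-> ->]|_] //=.
  by case: (v == z); rewrite /= ?andbF.
by case: (boolP (bi G1 u v)) => [/bi1z/andP[-> ->]|].
Qed.

Lemma bi_add_dir_sym a b : bi G a b = bi G b a.
Proof. by case: mag1 => -[_ _ h _ _] _ _ _; apply: h. Qed.

Lemma adj_add_dir_sink u : adj G z u -> u = xi.
Proof.
rewrite /adj /= dir1_from_z dir1_z bi1_from_z eqxx andbT [z == xi]eq_sym (negbTE hxiz).
by rewrite orbF => /eqP.
Qed.

Lemma dir_add_dir_sink : dir G xi z.
Proof. by rewrite /= !eqxx orbT. Qed.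

Lemma no_arrow_add_dir_sink : ~~ arrow_at G z xi.
Proof. by rewrite /arrow_at /= dir1_from_z bi1_from_z [z == xi]eq_sym (negbTE hxiz). Qed.

Let no_dir_from_sink u : ~~ dir G z u.
Proof. by rewrite /= dir1_from_z [z == xi]eq_sym (negbTE hxiz). Qed.

Let antiparallel_sink : ~~ (dir G xi z && dir G z xi).
Proof. by move: no_arrow_add_dir_sink; rewrite /arrow_at negb_or => /andP[/negbTE ->]; rewrite andbF. Qed.

Let desc_add_dir a b : a != z -> b != z -> desc G a b -> desc G1 a b.
Proof.
move=> az bz hc; rewrite -del_node_add_dir.
exact (desc_del_nodeI bi_add_dir_sym adj_add_dir_sink antiparallel_sink az bz hc).
Qed.

Lemma add_dir_acyclic a b : dir G a b -> ~~ connect (dir G) b a.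
Proof.
case/orP => [h|/andP[/eqP -> /eqP ->]].
  have /andP[az bz] := dir1z h.
  case: mag1 => _ hacy _ _; apply: contra (hacy a b h); exact: desc_add_dir.
by apply/negP => /(connect_from_sink no_dir_from_sink) /eqP; rewrite (negbTE hxiz).
Qed.

(* Every path from [z] to [b] starts [z -> xi] with [xi] a non-collider. *)
Lemma msep_add_dir_sink b : b != xi -> b != z -> msep G z b [set xi].
Proof.
move=> bxi bz [|u s] /and3P[hp /eqP hl hu].
  by move: hl bz => /= <-; rewrite eqxx.
move: hp => /= /andP[/adj_add_dir_sink eu hp]; subst u.
case: s hp hl hu => [|w s] hp hl hu; first by move: bxi; rewrite -hl /= eqxx.
have h1 : 1 < size [:: xi, w & s] by [].
apply/existsP; exists (Ordinal h1) => //=.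
by rewrite /blocked_at /collider (negbTE no_arrow_add_dir_sink) /= finset.in_set1 eqxx.
Qed.

Lemma is_MAG_add_dir : is_MAG [set: I] G.
Proof.
case: (mag1) => [[_ _ hsym1 hirr1 hanti1] hacy1 halm1 hmax1].
split; first split.
- by move=> a b _; rewrite !finset.in_setT.
- by move=> a b _; rewrite !finset.in_setT.
- exact: bi_add_dir_sym.
- move=> a /=; case/andP: (hirr1 a) => /negbTE -> ->; rewrite andbT /=.
  by apply/negP => /andP[/eqP ea /eqP eb]; move: hxiz; rewrite -ea eb eqxx.
- move=> a b /=; case: (boolP (dir G1 a b)) => h /=.
    have /andP[az _] := dir1z h.
    by rewrite (negbTE az) andbF orbF; move: (hanti1 a b); rewrite h.
  case: (boolP ((a == xi) && (b == z))) => //= /andP[/eqP -> /eqP ->].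
  by rewrite dir1_from_z bi1_z [z == xi]eq_sym (negbTE hxiz).
- exact: add_dir_acyclic.
- move=> a b /= h; have /andP[bz az] := bi1z h.
  by apply: contra (halm1 a b h); apply: desc_add_dir.
move=> a b _ _ hne hna.
have zW : z \notin [set xi] by rewrite finset.in_set1 eq_sym.
have sT : [set xi] \subset [set: I] by apply/fintype.subsetP => t _; rewrite finset.in_setT.
have [ea|az] := eqVneq a z; first subst a.
  have bxi : b != xi by apply: contraNneq hna => ->; rewrite /adj dir_add_dir_sink orbT.
  exists [set xi]; split => //; first by rewrite finset.in_set1.
  by apply: msep_add_dir_sink; rewrite // eq_sym.
have [eb|bz] := eqVneq b z; first subst b.
  have axi : a != xi by apply: contraNneq hna => ->; rewrite /adj dir_add_dir_sink.
  exists [set xi]; split => //; first by rewrite finset.in_set1.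
  by apply: msep_sym (msep_add_dir_sink axi az); apply: bi_add_dir_sym.
have hna1 : ~~ adj G1 a b.
  by apply: contra hna; rewrite -{1}del_node_add_dir adj_del_node => /andP[].
have [W [hW haW hbW hm]] := hmax1 a b (etrans (in_setTD1 z a) az)
  (etrans (in_setTD1 z b) bz) hne hna1.
exists W; split => //.
have hzW : z \notin W by move: hW; rewrite subsetD1 => /andP[].
apply: (msep_of_del_node bi_add_dir_sym adj_add_dir_sink antiparallel_sink) => //.
by rewrite del_node_add_dir.
Qed.

End AddSink.

Section Ratios.
Variable R : numDomainType.
Local Open Scope ring_scope.

(* In ratio form: [a / yet = xet / et = xe / e], and [et = 0] forces [a = yet = 0]. *)
Lemma ratio_chain (a et xet yet e xe : R) :
  0 <= a -> a <= et -> 0 <= yet -> yet <= et ->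
  a * et = xet * yet -> xet * e = xe * et -> a * e = yet * xe.
Proof.
move=> a0 aet y0 yet0 hA hB.
have [et0|ne] := eqVneq et 0.
  move: aet yet0; rewrite et0 => aet yet0.
  have -> : a = 0 by apply/eqP; rewrite eq_le a0 aet.
  have -> : yet = 0 by apply/eqP; rewrite eq_le y0 yet0.
  by rewrite !mul0r.
by apply: (mulIf ne); rewrite mulrAC hA (mulrC xet) -mulrA hB mulrA.
Qed.

(* In ratio form: [xyz / yz = xe / e = xz / zz], and [e = 0] forces [xyz = xz = 0]. *)
Lemma ratio_cross (xyz yz xz zz e xe : R) :
  0 <= xyz -> xyz <= e -> 0 <= xz -> xz <= e ->
  xyz * e = yz * xe -> xz * e = zz * xe -> xyz * zz = xz * yz.
Proof.
move=> h0 h1 h2 h3 hi hii.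
have [e0|ne] := eqVneq e 0.
  move: h1 h3; rewrite e0 => h1 h3.
  have -> : xyz = 0 by apply/eqP; rewrite eq_le h0 h1.
  have -> : xz = 0 by apply/eqP; rewrite eq_le h2 h3.
  by rewrite !mul0r.
by apply: (mulIf ne); rewrite mulrAC hi (mulrAC xz) hii; ring.
Qed.

End Ratios.

Section Events.
Context {d : measure_display} {Omega : measurableType d} {R : realType}.
Context {I : finType}.
Variables (P : probability Omega R) (X : I -> Omega -> nat).
Hypothesis hX : discrete_rvs X.
Local Open Scope classical_set_scope.
Local Open Scope ereal_scope.

Lemma measurable_evS (W : {set I}) v : measurable (evS X W v).
Proof.
have -> : evS X W v = [set w | forall j, j \in enum W -> X j w = v j].
  apply/seteqP; split => w /= h j; first by rewrite mem_enum => /h.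
  by rewrite -mem_enum => /h.
elim: (enum W) => [|j r IH].
  have -> : [set w | forall j, j \in [::] -> X j w = v j] = setT by apply/seteqP; split.
  exact: measurableT.
have -> : [set w | forall j', j' \in j :: r -> X j' w = v j'] =
    ev1 X j (v j) `&` [set w | forall j, j \in r -> X j w = v j].
  apply/seteqP; split => w /= => [h|[h1 h2] t].
    by split => [|t ht]; apply: h; rewrite inE ?eqxx ?ht ?orbT.
  by rewrite inE => /orP[/eqP ->|/h2].
exact: measurableI (hX _ _) IH.
Qed.

Lemma evS_setU1 (W : {set I}) i v : evS X (i |: W) v = ev1 X i (v i) `&` evS X W v.
Proof.
apply/seteqP; split => w /= => [h|[h1 h2] t].
  by split => [|t ht]; apply: h; rewrite in_setU1 ?eqxx ?ht ?orbT.
by rewrite in_setU1 => /orP[/eqP ->|/h2].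
Qed.

Lemma evS_update (W : {set I}) i t v : i \notin W ->
  evS X W (fun j => if j == i then t else v j) = evS X W v.
Proof.
move=> hi; apply/seteqP; split => w /= h j hj; move: (h j hj);
  by case: eqP => // e; subst j; move: hi; rewrite hj.
Qed.

Lemma evS_set0 v : evS X (finset.set0 : {set I}) v = setT.
Proof. by apply/seteqP; split => w //= _ j; rewrite finset.in_set0. Qed.

Lemma prob_partition i (T : set Omega) : measurable T ->
  P T = \sum_(t <oo) P (ev1 X i t `&` T).
Proof.
move=> mT.
have eT : T = \bigcup_t (ev1 X i t `&` T) :> set Omega.
  apply/seteqP; split => w /=; last by move=> [t _ []].
  by move=> hw; exists (X i w).
rewrite {1}eT measure_semi_bigcup //.
- by move=> t; apply: measurableI (hX _ _) mT.
- by move=> a b _ _ [w [[/= <- _] [/= <- _]]].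
- by apply: bigcupT_measurable => t; apply: measurableI (hX _ _) mT.
Qed.

Lemma prob_mul_eqE (A B C D : set Omega) :
  measurable A -> measurable B -> measurable C -> measurable D ->
  (P A * P B = P C * P D) <-> (fine (P A) * fine (P B) = fine (P C) * fine (P D))%R.
Proof.
move=> mA mB mC mD.
have e E : measurable E -> P E = (fine (P E))%:E by move=> mE; rewrite fineK ?fin_num_measure.
rewrite [in X in X <-> _](e _ mA) (e _ mB) (e _ mC) (e _ mD) -!EFinM.
by split => [[]|->].
Qed.

Lemma fine_prob_le (A B : set Omega) : measurable A -> measurable B -> A `<=` B ->
  (fine (P A) <= fine (P B))%R.
Proof.
move=> mA mB sAB; rewrite fine_le ?fin_num_measure //.
by apply: le_measure => //; rewrite inE.
Qed.

Lemma cond_indep_sym x y W : cond_indep P X x y W -> cond_indep P X y x W.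
Proof.
move=> h a b v; rewrite (setIC (ev1 X y a) (ev1 X x b)) (muleC (P (ev1 X y a `&` _))).
exact: h.
Qed.

Lemma cond_indep_mem x y (W : {set I}) : y \in W -> cond_indep P X x y W.
Proof.
move=> hy a b v; set E := evS X W v.
have [->|ne] := eqVneq b (v y).
  have e1 : ev1 X y (v y) `&` E = E.
    by apply/seteqP; split => w /= => [[]//|h]; split => //; apply: h.
  by rewrite -setIA e1 muleC.
have e1 : ev1 X y b `&` E = set0.
  by apply/seteqP; split => w //= [h1 h2]; move: ne; rewrite -h1 (h2 y hy) eqxx.
by rewrite -setIA e1 setI0 measure0 !mul0e mule0.
Qed.

End Events.

Section FunctionalDependency.
Context {d : measure_display} {Omega : measurableType d} {R : realType}.
Context {I : finType}.
Variables (P : probability Omega R) (X : I -> Omega -> nat).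
Hypothesis hX : discrete_rvs X.
Local Open Scope classical_set_scope.
Local Open Scope ereal_scope.
Variables (xi z : I) (f : nat -> nat).
Hypothesis hf : {ae P, forall w, X z w = f (X xi w)}.

(* The event [f (X xi) = c], which is a.s. the event [X z = c]. *)
Let fd_event c := [set w | f (X xi w) = c].

Let measurable_fd_event c : measurable (fd_event c).
Proof.
have -> : fd_event c = \bigcup_t (if f t == c then ev1 X xi t else set0).
  apply/seteqP; split => w /= => [h|[t _]]; first by exists (X xi w); rewrite ?h ?eqxx.
  by case: eqP => // <-; rewrite /ev1 /fd_event /= => ->.
by apply: bigcupT_measurable => t; case: eqP => _; [exact: hX | exact: measurable0].
Qed.

Local Ltac meas := repeat apply: measurableI; try apply: hX;
  try apply: measurable_evS; try apply: measurable_fd_event; try exact: measurableT;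
  try assumption.

Let prob_fd_subst c (S : set Omega) : measurable S ->
  P (ev1 X z c `&` S) = P (fd_event c `&` S).
Proof.
move=> mS; case: hf => N [mN PN hN].
have sub A B : measurable A -> measurable B -> A `&` ~` N `<=` B -> P A <= P B.
  move=> mA mB hAB; rewrite -(measureU0 mB mN PN); apply: le_measure;
    rewrite ?inE //; first exact: measurableU.
  by move=> w hw; have [wN|wN] := pselect (N w); [right | left; apply: hAB].
apply/eqP; rewrite eq_le; apply/andP; split; apply: sub; try by meas.
- move=> w [[/= <- hS] wN]; split => //.
  by apply: contrapT => hne; apply: wN; apply: hN => e; apply: hne; rewrite e.
- move=> w [[/= <- hS] wN]; split => //=.
  by apply: contrapT => hne; apply: wN; apply: hN.
Qed.

Let setI_ev1_fd_event t c (T : set Omega) :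
  ev1 X xi t `&` (fd_event c `&` T) = if f t == c then ev1 X xi t `&` T else set0.
Proof.
apply/seteqP; split => w /=; case: eqP => e //=.
- by move=> [h1 [_ h3]].
- by move=> [h1 [h2 _]]; apply: e; rewrite -h1.
- by move=> [h1 h3]; split => //; split => //; rewrite /fd_event /= h1.
Qed.

(* [fd_event c] is the disjoint union of the level sets [X xi = t], [f t = c]. *)
Let eq_mul_fd_event (T1 T2 E1 E2 : set Omega) c :
  measurable T1 -> measurable T2 -> measurable E1 -> measurable E2 ->
  (forall t, P (ev1 X xi t `&` T1) * P E1 = P (ev1 X xi t `&` T2) * P E2) ->
  P (fd_event c `&` T1) * P E1 = P (fd_event c `&` T2) * P E2.
Proof.
move=> m1 m2 mE1 mE2 h.
rewrite (prob_partition P hX xi (measurableI _ _ (measurable_fd_event c) m1)).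
rewrite (prob_partition P hX xi (measurableI _ _ (measurable_fd_event c) m2)).
rewrite -(fineK (fin_num_measure P _ mE1)) -(fineK (fin_num_measure P _ mE2)).
rewrite !(muleC _ (fine _)%:E) -!nneseriesZl; try by move=> *; apply: measure_ge0.
apply: eq_eseriesr => t _; rewrite !setI_ev1_fd_event; case: eqP => _.
  by rewrite !(muleC (fine _)%:E) !fineK ?fin_num_measure.
by rewrite measure0 !mule0.
Qed.

Let fd_event_setI_evS (W : {set I}) v c (S : set Omega) : xi \in W -> S `<=` evS X W v ->
  fd_event c `&` S = if f (v xi) == c then S else set0.
Proof.
move=> hxi hS; apply/seteqP; split => w /=; case: eqP => e //=.
- by move=> [].
- by move=> [h1 h2]; apply: e; rewrite -h1 (hS w h2 xi hxi).
- by move=> h; split => //; rewrite /fd_event /= (hS w h xi hxi) e.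
Qed.

Lemma cond_indep_setU1_fd (x y : I) (W : {set I}) : xi \in W ->
  cond_indep P X x y W -> cond_indep P X x y (z |: W).
Proof.
move=> hxi h a b v; rewrite evS_setU1; set E := evS X W v.
have mE : measurable E by apply: measurable_evS.
rewrite (setICA (ev1 X x a `&` ev1 X y b)) (setICA (ev1 X x a)) (setICA (ev1 X y b)).
rewrite !prob_fd_subst; try by meas.
rewrite !(fd_event_setI_evS (W := W) (v := v)) //; try by apply: subIsetr.
by case: eqP => _; [apply: h | rewrite measure0 !mul0e].
Qed.

Lemma cond_indep_fd_image (y : I) (W : {set I}) :
  cond_indep P X xi y W -> cond_indep P X z y W.
Proof.
move=> h a b v; set E := evS X W v.
have mE : measurable E by apply: measurable_evS.
rewrite -setIA !prob_fd_subst; try by meas.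
apply: eq_mul_fd_event; try by meas.
by move=> t; rewrite setIA; apply: h.
Qed.

Lemma cond_indep_fd_determined (y : I) (W : {set I}) : xi \in W -> cond_indep P X z y W.
Proof.
move=> hxi a b v; set E := evS X W v.
have mE : measurable E by apply: measurable_evS.
rewrite -setIA !prob_fd_subst; try by meas.
rewrite !(fd_event_setI_evS (W := W) (v := v)) //; try by apply: subIsetr.
by case: eqP => _; [rewrite muleC | rewrite measure0 !mul0e].
Qed.

(* The contraction step: from [x _|_ y | W, xi] and [x _|_ xi | W], summing
   over the values of [xi] mapped to [c] gives [x _|_ y | W, f xi]. *)
Lemma cond_indep_fd_contract (x y : I) (W : {set I}) : xi \notin W ->
  cond_indep P X x y (xi |: W) -> cond_indep P X x xi W ->
  cond_indep P X x y (z |: W).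
Proof.
move=> hxi hA hB a b v; rewrite evS_setU1; set E := evS X W v; set c := v z.
have mE : measurable E by apply: measurable_evS.
rewrite (setICA (ev1 X x a `&` ev1 X y b)) (setICA (ev1 X x a)) (setICA (ev1 X y b)).
rewrite !prob_fd_subst; try by meas.
have hi : P (fd_event c `&` (ev1 X x a `&` ev1 X y b `&` E)) * P E =
          P (fd_event c `&` (ev1 X y b `&` E)) * P (ev1 X x a `&` E).
  apply: eq_mul_fd_event; try by meas.
  move=> t.
  have HA := hA a b (fun j => if j == xi then t else v j).
  rewrite evS_setU1 evS_update // eqxx -/E in HA.
  have HB := hB a t v; rewrite -/E in HB.
  rewrite (setICA (ev1 X x a `&` ev1 X y b)) (setICA (ev1 X x a)) (setICA (ev1 X y b)) in HA.
  rewrite (setIC (ev1 X x a) (ev1 X xi t)) -setIA in HB.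
  move: HA HB; rewrite !prob_mul_eqE; try by meas.
  apply: ratio_chain; try by apply: fine_ge0; apply: measure_ge0.
  1,2: by apply: (fine_prob_le P); [meas | meas | apply: setIS; apply: subIsetr].
have hii : P (fd_event c `&` (ev1 X x a `&` E)) * P E =
           P (fd_event c `&` E) * P (ev1 X x a `&` E).
  apply: eq_mul_fd_event; try by meas.
  move=> t; have := hB a t v; rewrite -/E (setIC (ev1 X x a) (ev1 X xi t)) -setIA => ->.
  exact: muleC.
move: hi hii; rewrite !prob_mul_eqE; try by meas.
apply: ratio_cross; try by apply: fine_ge0; apply: measure_ge0.
all: by apply: (fine_prob_le P); [meas | meas | move=> w /= [_ [_ h]]].
Qed.

(* By the standing assumption [X z] takes a positive-probability value [c]
   different from [f a1], although [X xi = a1] forces [X z = f a1]. *)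
Lemma fd_not_indep : two_valued_vars P X ->
  ~ cond_indep P X z xi (finset.set0 : {set I}).
Proof.
move=> hnd hci.
have [a1 [a2 [_ [h1 _]]]] := hnd xi.
have [c [hcne hc]] : exists c, f a1 <> c /\ 0 < P (ev1 X z c).
  have [c1 [c2 [ne [hc1 hc2]]]] := hnd z.
  have [e|e] := eqVneq (f a1) c1; last by exists c1; split => //; apply/eqP.
  by exists c2; split => // e2; apply: ne; rewrite -e -e2.
have := hci c a1 (fun _ => 0%N).
rewrite evS_set0 !setIT probability_setT mule1 prob_fd_subst; last exact: hX.
rewrite setIC (_ : ev1 X xi a1 `&` fd_event c = set0); last first.
  by apply/seteqP; split => w //= [h3 h2]; apply: hcne; rewrite -h2 -h3.
rewrite measure0 => /esym/eqP; rewrite mule_eq0 => /orP[] /eqP e.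
  by move: hc; rewrite e ltxx.
by move: h1; rewrite e ltxx.
Qed.

End FunctionalDependency.

Section Skeletons.
Context {d : measure_display} {Omega : measurableType d} {R : realType}.
Context {I : finType}.
Variables (P : probability Omega R) (X : I -> Omega -> nat).

Lemma skel_ok_del_pendant (z xi : I) (S : rel I) :
  skel_ok P X [set: I] S -> (forall u, S z u -> u = xi) ->
  skel_ok P X ([set: I] :\ z) (fun a b => [&& S a b, a != z & b != z]).
Proof.
move=> [G [mag adjG gmp]] hpend.
have hpendG u : adj G z u -> u = xi by rewrite adjG; apply: hpend.
case: (mag) => [[_ _ hsym _ hanti] _ _ _].
have hxz : ~~ (dir G xi z && dir G z xi) by case/andP: (hanti xi z).
exists (del_node G z); split.
- exact: is_MAG_del_node mag hpendG.
- by move=> a b; rewrite adj_del_node adjG.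
- move=> x y W hx hy hne hW hxW hyW hm.
  have hzW : z \notin W by move: hW; rewrite subsetD1 => /andP[].
  apply: gmp => //; rewrite ?finset.in_setT ?finset.subsetT //.
  by apply: (msep_of_del_node hsym hpendG hxz) => //; rewrite -in_setTD1.
Qed.

Lemma skel_ok_isolated_indep (S : rel I) x y : skel_ok P X [set: I] S -> x != y ->
  (forall u, ~~ S x u) -> cond_indep P X x y finset.set0.
Proof.
move=> [G [_ adjG gmp]] hne hiso.
apply: gmp; rewrite ?finset.in_setT ?finset.in_set0 ?finset.sub0set //.
move=> [|u s] /and3P[hp /eqP hl _]; first by move: hne; rewrite -hl eqxx.
by move: hp => /= /andP[]; rewrite adjG (negbTE (hiso u)).
Qed.

End Skeletons.

Section SinkExtension.
Context {d : measure_display} {Omega : measurableType d} {R : realType}.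
Context {I : finType}.
Variables (P : probability Omega R) (X : I -> Omega -> nat).
Hypothesis hX : discrete_rvs X.
Variables (z xi : I) (f : nat -> nat).
Hypothesis hxiz : xi != z.
Hypothesis hf : {ae P, forall w, X z w = f (X xi w)}.

Let subV (U : {set I}) : z \notin U -> U \subset [set: I] :\ z.
Proof. by move=> hz; rewrite subsetD1 finset.subsetT hz. Qed.

Section GlobalMarkov.
Variable G1 : mgraph I.
Hypothesis mag1 : is_MAG ([set: I] :\ z) G1.
Hypothesis gmp1 : GMP P X ([set: I] :\ z) G1.

Local Notation G := (add_dir G1 xi z).

Let gmp1' x y (W : {set I}) : x != z -> y != z -> x != y -> z \notin W -> x \notin W -> y \notin W ->
  msep (del_node G z) x y W -> cond_indep P X x y W.
Proof.
move=> xz yz hne zW xW yW; rewrite (del_node_add_dir xi mag1).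
by apply: gmp1; rewrite ?in_setTD1 ?subV.
Qed.

Let hsym := bi_add_dir_sym xi mag1.
Let hpend := adj_add_dir_sink hxiz mag1.
Let hxz := dir_add_dir_sink G1 z xi.
Let hnoarr := no_arrow_add_dir_sink hxiz mag1.

Let cond_indep_sink y (W : {set I}) : y != z -> z \notin W -> y \notin W -> msep G z y W ->
  cond_indep P X z y W.
Proof.
move=> yz zW yW hm.
have [xiW|xiW] := boolP (xi \in W); first exact: (cond_indep_fd_determined hX hf).
have [yxi hm1] := msep_pendant hsym hpend hxz hnoarr hxiz yz zW xiW hm.
by apply: (cond_indep_fd_image hX hf); apply: gmp1' => //; rewrite eq_sym.
Qed.

(* [G1] separates [x] and [y] given [W] and [xi], and by weak transitivity one
   of them from [xi] given [W]; contraction then trades [xi] for [z = f xi]. *)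
Let cond_indep_setU1_sink x y (W : {set I}) : x != z -> y != z -> x != y -> x \notin W ->
  y \notin W -> z \notin W -> msep G x y (z |: W) -> cond_indep P X x y (z |: W).
Proof.
move=> xz yz hne xW yW zW hm.
have hW : (z |: W) :\ z = W by rewrite setU1K.
have ciW : cond_indep P X x y W.
  by apply: gmp1' => //; rewrite -hW; apply: (msep_del_node_setD1 hsym hpend).
have [xiW|xiW] := boolP (xi \in W); first exact: (cond_indep_setU1_fd hX hf xiW ciW).
have [exi|xxi] := eqVneq x xi.
  subst x; apply: cond_indep_sym; apply: (cond_indep_fd_contract hX hf xiW).
    by apply: cond_indep_mem; rewrite setU11.
  exact: cond_indep_sym.
have [eyi|yxi] := eqVneq y xi.
  subst y; apply: (cond_indep_fd_contract hX hf xiW) => //.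
  by apply: cond_indep_mem; rewrite setU11.
have hA : cond_indep P X x y (xi |: W).
  have zxW : z \notin xi |: W by rewrite in_setU1 negb_or eq_sym hxiz zW.
  have xxW : x \notin xi |: W by rewrite in_setU1 negb_or xxi xW.
  have yxW : y \notin xi |: W by rewrite in_setU1 negb_or yxi yW.
  apply: gmp1' => //; apply: (msep_del_node hsym hpend xz yz _ _ hm).
  - move=> t; rewrite in_setU1 => /orP[/eqP ->|htW].
      by exists z; [exact: setU11 | exact: connect1 hxz].
    by exists t; [exact: setU1r | exact: connect0].
  - by move=> t tz; rewrite !in_setU1 (negbTE tz) /= => ->; rewrite orbT.
have xizW : xi \notin z |: W by rewrite in_setU1 negb_or hxiz xiW.
have := msep_pendant_weak_trans hsym hpend hxz hxiz (add_dir_acyclic hxiz mag1)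
  xz yz xxi yxi (setU11 z W) xizW hm.
rewrite hW => -[hw|hw].
  by apply: (cond_indep_fd_contract hX hf xiW hA); apply: gmp1'.
apply: cond_indep_sym; apply: (cond_indep_fd_contract hX hf xiW).
  exact: cond_indep_sym.
by apply: gmp1'.
Qed.

Lemma GMP_add_dir : GMP P X [set: I] G.
Proof.
move=> x y W _ _ hne _ hxW hyW hm.
have [ex|xz] := eqVneq x z.
  by subst x; apply: cond_indep_sink => //; rewrite eq_sym.
have [ey|yz] := eqVneq y z.
  subst y; apply: cond_indep_sym; apply: cond_indep_sink => //.
  exact: msep_sym hsym hm.
have [zW|zW] := boolP (z \in W); last first.
  have hW : W :\ z = W by apply/finset.setDidPl; rewrite disjoint_sym disjoints1.
  by apply: gmp1' => //; rewrite -hW; apply: (msep_del_node_setD1 hsym hpend).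
rewrite -(finset.setD1K zW); apply: cond_indep_setU1_sink => //.
- by rewrite in_setD1 negb_and hxW orbT.
- by rewrite in_setD1 negb_and hyW orbT.
- by rewrite setD11.
- by rewrite finset.setD1K.
Qed.

End GlobalMarkov.

Variables (S1 : rel I).
Hypothesis hS1 : harmonious P X ([set: I] :\ z) S1.
Hypothesis hnd : two_valued_vars P X.

Local Notation S := (rel_union S1 (edge_graph xi z)).

Lemma union_edge_minimal (S' : rel I) : ugraph_on [set: I] S' ->
  (forall a b, S' a b -> S a b) -> (exists a b, S a b && ~~ S' a b) ->
  ~ skel_ok P X [set: I] S'.
Proof.
move=> [_ hS'sym hS'irr] hsub [a0 [b0 /andP[hab0 hnab0]]] hok.
case: hS1 => [[hS1V _ _] _ min1].
have S1z a b : S1 a b -> a != z by move/hS1V => /andP[]; rewrite in_setTD1.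
have hpend u : S' z u -> u = xi.
  move/hsub; rewrite /rel_union /edge_graph => /orP[/S1z|]; first by rewrite eqxx.
  by rewrite eq_sym (negbTE hxiz) /= => /andP[_ /eqP].
have [hxz'|hxz'] := boolP (S' xi z); last first.
  apply: (fd_not_indep hX hf hnd); apply: (skel_ok_isolated_indep hok); first by rewrite eq_sym.
  move=> u; apply/negP => hzu; have eu := hpend u hzu; subst u.
  by move: hzu; rewrite hS'sym (negbTE hxz').
apply: (min1 (fun a b => [&& S' a b, a != z & b != z]) _ _ _
  (skel_ok_del_pendant hok hpend)).
- split.
  + by move=> a b /and3P[_ ha hb]; rewrite !in_setTD1 ha hb.
  + by move=> a b; rewrite hS'sym; case: (a != z); case: (b != z); rewrite ?andbF.
  + by move=> a; rewrite (negbTE (hS'irr a)).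
- move=> a b /and3P[h ha hb]; move: (hsub a b h); rewrite /rel_union /edge_graph.
  by case/or3P => [//|/andP[_ /eqP e]|/andP[/eqP e _]]; [move: hb | move: ha];
    rewrite e eqxx.
- exists a0, b0; move: hab0; rewrite /rel_union /edge_graph => /orP[h|h].
    by rewrite h /= negb_and hnab0.
  exfalso; move: hnab0 hxz'.
  by case/orP: h => /andP[/eqP -> /eqP ->] h1 h2; [|rewrite hS'sym in h1]; rewrite h2 in h1.
Qed.

End SinkExtension.

Lemma ugraph_on_union_edge {I : finType} (S : rel I) (x z : I) :
  (forall a b, S a b = S b a) -> (forall a, ~~ S a a) -> x != z ->
  ugraph_on [set: I] (rel_union S (edge_graph x z)).
Proof.
move=> hsym hirr hxz; split => [a b _|a b|a]; rewrite ?finset.in_setT // /rel_union.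
  by rewrite hsym /edge_graph; case: (a == x); case: (b == z); case: (a == z); case: (b == x).
rewrite (negbTE (hirr a)) /=; apply/negP => /orP[] /andP[/eqP ea /eqP eb].
  by move: hxz; rewrite -ea -eb eqxx.
by move: hxz; rewrite -ea -eb eqxx.
Qed.

Theorem theorem3p4 (d : measure_display) (Omega : measurableType d) (R : realType)
  (I : finType) (P : probability Omega R) (X : I -> Omega -> nat)
  (hX : discrete_rvs X) (hnd : two_valued_vars P X)
  (hacyc : fd_acyclic P X)
  (z xi : I) (hsink : fd_sink P X z) (hedge : fd_edge P X xi z)
  (S1 : rel I) (hS1 : harmonious P X ([set: I] :\ z) S1) :
  harmonious P X [set: I] (rel_union S1 (edge_graph xi z)).
Proof.
move/asboolP: hedge => [hxiz [f hf]].
have [[_ hS1sym hS1irr] [G1 [mag1 adj1 gmp1]] _] := hS1.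
split.
- exact: ugraph_on_union_edge.
- exists (add_dir G1 xi z); split.
  + exact: is_MAG_add_dir hxiz mag1.
  + by move=> a b; rewrite adj_add_dir /rel_union adj1.
  + exact (GMP_add_dir hX hxiz hf mag1 gmp1).
- exact (union_edge_minimal hX hxiz hf hS1 hnd).
Qed.
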